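(* Let $R$ be a commutative associative unital ring, $B$ an $R$-algebra, $\beta$ an $R$-bilinear form on $B$, and $S$ a commutative associative unital $R$-algebra. If $\beta$ is $\mathbf{Aut}(B)$-invariant, then $\beta_S$ is $\mathbf{Aut}(B\otimes_R S)$-invariant. The converse holds if $S$ is faithfully flat over $R$.
   Context: An $R$-algebra is an $R$-module with an $R$-bilinear product (no identities assumed). For an $R$-bilinear form $\beta$ on an $R$-module $M$ and a commutative $R$-algebra $T$, the base change $\beta_T$ is the $T$-bilinear form on $M\otimes_R T$ with $\beta_T(m\otimes t,m'\otimes t')=\beta(m,m')tt'$. For an algebra $C$ over a commutative ring $T_0$ and a $T_0$-bilinear form $\gamma$ on $C$, $\gamma$ is $\mathbf{Aut}(C)$-invariant if for every commutative $T_0$-algebra $T$ and every $T$-algebra automorphism $f$ of $C\otimes_{T_0}T$ one has $\gamma_T(f(x),f(y))=\gamma_T(x,y)$ for all $x,y$. *)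

From HB Require Import structures.
From mathcomp Require Import all_boot all_order all_algebra.
Set Implicit Arguments. Unset Strict Implicit. Unset Printing Implicit Defensive.
Import GRing.Theory.
Local Open Scope ring_scope.

(* A commutative (associative, unital, possibly zero) K-algebra T is encoded as
   a commutative ring T together with its structure morphism phi : K -> T.   *)

Definition lin (K : pzRingType) (U V : lmodType K) (f : U -> V) : Prop :=
  forall (a : K) (x y : U), f (a *: x + y) = a *: f x + f y.

(* K0-linear maps from a K0-module C into a T-module Q, where T is a K0-algebra
   via phi (Q viewed as a K0-module by restriction of scalars). *)
Definition lin_along (K0 T : comPzRingType) (phi : {rmorphism K0 -> T})
    (C : lmodType K0) (Q : lmodType T) (f : C -> Q) : Prop :=
  forall (a : K0) (x y : C), f (a *: x + y) = phi a *: f x + f y.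

Definition bilin_prod (K : pzRingType) (V : lmodType K) (m : V -> V -> V) : Prop :=
  (forall (a : K) (x y z : V), m (a *: x + y) z = a *: m x z + m y z) /\
  (forall (a : K) (x y z : V), m z (a *: x + y) = a *: m z x + m z y).

Definition bilin_form (K : comPzRingType) (V : lmodType K) (b : V -> V -> K) : Prop :=
  (forall (a : K) (x y z : V), b (a *: x + y) z = a * b x z + b y z) /\
  (forall (a : K) (x y z : V), b z (a *: x + y) = a * b z x + b z y).

(* (P, iota) is the base change C ⊗_{K0} T (iota c = c ⊗ 1), characterized by
   the universal property of extension of scalars. *)
Definition base_change (K0 T : comPzRingType) (phi : {rmorphism K0 -> T})
    (C : lmodType K0) (P : lmodType T) (iota : C -> P) : Prop :=
  lin_along phi iota /\
  forall (Q : lmodType T) (f : C -> Q), lin_along phi f ->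
    (exists g : P -> Q, lin g /\ forall c, g (iota c) = f c) /\
    (forall g g' : P -> Q, lin g -> lin g' ->
       (forall c, g (iota c) = f c) -> (forall c, g' (iota c) = f c) ->
       forall p, g p = g' p).

Definition base_prod (K0 T : comPzRingType) (phi : {rmorphism K0 -> T})
    (C : lmodType K0) (P : lmodType T) (iota : C -> P)
    (mC : C -> C -> C) (mP : P -> P -> P) : Prop :=
  bilin_prod mP /\ forall c c', mP (iota c) (iota c') = iota (mC c c').

Definition base_form (K0 T : comPzRingType) (phi : {rmorphism K0 -> T})
    (C : lmodType K0) (P : lmodType T) (iota : C -> P)
    (b : C -> C -> K0) (bP : P -> P -> T) : Prop :=
  bilin_form bP /\ forall c c', bP (iota c) (iota c') = phi (b c c').

Definition alg_aut (T : comPzRingType) (P : lmodType T) (mP : P -> P -> P)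
    (f : P -> P) : Prop :=
  lin f /\ bijective f /\ forall x y, f (mP x y) = mP (f x) (f y).

Definition aut_invariant (K0 : comPzRingType) (C : lmodType K0)
    (mC : C -> C -> C) (b : C -> C -> K0) : Prop :=
  forall (T : comPzRingType) (phi : {rmorphism K0 -> T}) (P : lmodType T)
         (iota : C -> P) (mP : P -> P -> P) (bP : P -> P -> T),
    base_change phi iota -> base_prod phi iota mC mP -> base_form phi iota b bP ->
    forall f : P -> P, alg_aut mP f -> forall x y, bP (f x) (f y) = bP x y.

Definition flat (R S : comPzRingType) (sigma : {rmorphism R -> S}) : Prop :=
  forall (M N : lmodType R) (u : M -> N) (PM PN : lmodType S)
         (iM : M -> PM) (iN : N -> PN) (uS : PM -> PN),
    lin u -> injective u -> base_change sigma iM -> base_change sigma iN ->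
    lin uS -> (forall m, uS (iM m) = iN (u m)) -> injective uS.

Definition faithfully_flat (R S : comPzRingType) (sigma : {rmorphism R -> S}) : Prop :=
  flat sigma /\
  forall (M : lmodType R) (PM : lmodType S) (iM : M -> PM),
    base_change sigma iM -> (forall p : PM, p = 0) -> forall m : M, m = 0.

From HB Require Import structures.
From mathcomp Require Import all_boot all_order all_algebra.
From mathcomp Require Import boolp.
Set Implicit Arguments. Unset Strict Implicit. Unset Printing Implicit Defensive.
Import GRing.Theory.
Local Open Scope ring_scope.
Local Open Scope quotient_scope.

(* Base change along R -> S followed by base change along an S-algebra S -> T is
   base change along R -> T, which gives the forward implication directly.
   For the converse, take R -> T and an automorphism f of B_T, and put
   T' = T (x)_R S.  Then B_T (x)_T T' is a base change of B_S along S -> T' to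
   which the product, the form and f extend, so invariance of beta_S gives
   psi (beta_T (f x) (f y)) = psi (beta_T x y) for psi : T -> T'.  Faithful
   flatness makes psi injective: if psi d = 0, then Rd (x) S -> T (x) S is
   injective with zero image, so Rd (x) S = 0 and d = 0.
   Base changes are specified only by their universal property, so the tensor
   products used here are built as formal sums of pure tensors modulo equality
   under every linear map out of them. *)

Section Linearity.
Variables (K T : comPzRingType) (phi : {rmorphism K -> T}).

Lemma linD (U V : lmodType T) (g : U -> V) : lin g -> forall x y, g (x + y) = g x + g y.
Proof. by move=> hg x y; have := hg 1 x y; rewrite !scale1r. Qed.

Lemma lin0 (U V : lmodType T) (g : U -> V) : lin g -> g 0 = 0.
Proof. by move=> hg; apply: (@addrI _ (g 0)); rewrite -linD // !addr0. Qed.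

Lemma lin_comp (U V W : lmodType T) (g : U -> V) (h : V -> W) :
  lin g -> lin h -> lin (fun x => h (g x)).
Proof. by move=> hg hh a x y; rewrite hg hh. Qed.

Lemma lin_comb (U V : lmodType T) (g g' : U -> V) (a : T) :
  lin g -> lin g' -> lin (fun x => a *: g x + g' x).
Proof.
move=> hg hg' b x y; rewrite hg hg' scalerDr !scalerA mulrC -!scalerA.
by rewrite addrACA -scalerDr.
Qed.

Lemma lin_alongD (C : lmodType K) (Q : lmodType T) (f : C -> Q) :
  lin_along phi f -> forall x y, f (x + y) = f x + f y.
Proof. by move=> hf x y; have := hf 1 x y; rewrite scale1r rmorph1 scale1r. Qed.

Lemma lin_along0 (C : lmodType K) (Q : lmodType T) (f : C -> Q) :
  lin_along phi f -> f 0 = 0.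
Proof. by move=> hf; apply: (@addrI _ (f 0)); rewrite -(lin_alongD hf) !addr0. Qed.

Lemma lin_alongB (C : lmodType K) (Q : lmodType T) (f : C -> Q) :
  lin_along phi f -> forall x y, f (x - y) = f x - f y.
Proof.
move=> hf x y; apply: (@addIr _ (f y)); rewrite -(lin_alongD hf) subrK.
by rewrite -addrA addNr addr0.
Qed.

Lemma lin_along_postcomp (C : lmodType K) (P Q : lmodType T) (j : C -> P) (g : P -> Q) :
  lin_along phi j -> lin g -> lin_along phi (fun x => g (j x)).
Proof. by move=> hj hg a x y; rewrite hj hg. Qed.

Lemma lin_along_precomp (C : lmodType K) (P : lmodType T) (g : C -> C) (j : C -> P) :
  lin g -> lin_along phi j -> lin_along phi (fun x => j (g x)).
Proof. by move=> hg hj a x y; rewrite hg hj. Qed.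
End Linearity.

(* A [lin] map into [restrict phi Q] is, definitionally, a [lin_along phi] map into [Q]. *)
Definition restrict (K T : comPzRingType) (phi : {rmorphism K -> T}) (Q : lmodType T) : Type :=
  Q.
Arguments restrict {K T} phi Q.

Section RestrictScalars.
Variables (K T : comPzRingType) (phi : {rmorphism K -> T}) (Q : lmodType T).
Local Notation restrict := (restrict phi Q).

HB.instance Definition _ := GRing.Zmodule.on restrict.

Definition restrict_scale (k : K) (q : restrict) : restrict := phi k *: (q : Q).

Lemma restrict_scaleA a b v :
  restrict_scale a (restrict_scale b v) = restrict_scale (a * b) v.
Proof. by rewrite /restrict_scale scalerA rmorphM. Qed.
Lemma restrict_scale1 : left_id 1 restrict_scale.
Proof. by move=> v; rewrite /restrict_scale rmorph1 scale1r. Qed.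
Lemma restrict_scaleDr : right_distributive restrict_scale +%R.
Proof. by move=> a u v; rewrite /restrict_scale scalerDr. Qed.
Lemma restrict_scaleDl v : {morph restrict_scale^~ v : a b / a + b}.
Proof. by move=> a b; rewrite /restrict_scale rmorphD scalerDl. Qed.
HB.instance Definition _ := GRing.Zmodule_isLmodule.Build K restrict
  restrict_scaleA restrict_scale1 restrict_scaleDr restrict_scaleDl.
End RestrictScalars.

Section BaseChangeTheory.
Variables (K T : comPzRingType) (phi : {rmorphism K -> T}) (C : lmodType K).
Variables (P : lmodType T) (iota : C -> P).
Hypothesis hbc : base_change phi iota.

Lemma base_change_eq (Q : lmodType T) (g g' : P -> Q) : lin g -> lin g' ->
  (forall c, g (iota c) = g' (iota c)) -> forall p, g p = g' p.
Proof.
move=> hg hg' e; have hf := lin_along_postcomp hbc.1 hg.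
by apply: ((hbc.2 Q _ hf).2 g g' hg hg') => // c; rewrite e.
Qed.

Lemma base_change_eq2 (Q : lmodType T) (m m' : P -> P -> Q) :
  (forall x, lin (m x)) -> (forall y, lin (fun x => m x y)) ->
  (forall x, lin (m' x)) -> (forall y, lin (fun x => m' x y)) ->
  (forall c c', m (iota c) (iota c') = m' (iota c) (iota c')) ->
  forall x y, m x y = m' x y.
Proof.
move=> hm hm' hn hn' e x y.
have ey c : m (iota c) y = m' (iota c) y.
  by apply: (base_change_eq (hm _) (hn _)) => c'; apply: e.
exact: (base_change_eq (hm' y) (hn' y)).
Qed.

Lemma base_change_lift (Q : lmodType T) (f : C -> Q) : lin_along phi f ->
  {g : P -> Q | lin g /\ forall c, g (iota c) = f c}.
Proof. by move=> hf; apply: cid; case: (hbc.2 Q f hf). Qed.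

Lemma base_change_lift2 (Q : lmodType T) (m : C -> C -> Q) :
  (forall c, lin_along phi (m c)) -> (forall c', lin_along phi (fun c => m c c')) ->
  {mP : P -> P -> Q | [/\ forall x, lin (mP x), forall y, lin (fun x => mP x y) &
     forall c c', mP (iota c) (iota c') = m c c']}.
Proof.
move=> hm hm'.
pose L c := sval (base_change_lift (hm c)).
have hL c : lin (L c) by case: (svalP (base_change_lift (hm c))).
have eL c c' : L c (iota c') = m c c' by case: (svalP (base_change_lift (hm c))) => _; apply.
have hLy y : lin_along phi (fun c => L c y).
  move=> a c c'; apply: (base_change_eq (hL _) (lin_comb (phi a) (hL c) (hL c'))) => c''.
  by rewrite !eL hm'.
pose N y := sval (base_change_lift (hLy y)).
have hN y : lin (N y) by case: (svalP (base_change_lift (hLy y))).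
have eN y c : N y (iota c) = L c y by case: (svalP (base_change_lift (hLy y))) => _; apply.
exists (fun x y => N y x); split=> // [x a y y'|c c'].
  by apply: (base_change_eq (hN _) (lin_comb a (hN y) (hN y'))) => c; rewrite !eN hL.
by rewrite eN eL.
Qed.
End BaseChangeTheory.

Lemma base_change_comp (K T U : comPzRingType) (phi : {rmorphism K -> T})
    (psi : {rmorphism T -> U}) (chi : {rmorphism K -> U}) (C : lmodType K)
    (P : lmodType T) (P' : lmodType U) (iota : C -> P) (iota' : P -> P') :
  (forall k, chi k = psi (phi k)) ->
  base_change phi iota -> base_change psi iota' ->
  base_change chi (fun c => iota' (iota c)).
Proof.
move=> chiE hbc hbc'; split=> [k x y|Q f hf]; first by rewrite hbc.1 hbc'.1 chiE.
split.
  have hf' : lin_along phi (f : C -> restrict psi Q) by move=> k x y; rewrite hf chiE.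
  have [h [hh eh]] := base_change_lift hbc hf'.
  have [g [hg eg]] := base_change_lift hbc' (hh : lin_along psi h).
  by exists g; split=> // c; rewrite eg eh.
move=> g g' hg hg' e e'; apply: (base_change_eq hbc') => // p.
have l := lin_along_postcomp hbc'.1 hg; have l' := lin_along_postcomp hbc'.1 hg'.
by apply: (base_change_eq hbc (l : lin (_ : P -> restrict psi Q)) l') => c; rewrite e e'.
Qed.

Lemma aut_invariant_base_change (R S : comPzRingType) (sigma : {rmorphism R -> S})
    (B : lmodType R) (mB : B -> B -> B) (beta : B -> B -> R)
    (BS : lmodType S) (iota : B -> BS) (mBS : BS -> BS -> BS) (betaS : BS -> BS -> S) :
  base_change sigma iota -> base_prod sigma iota mB mBS ->
  base_form sigma iota beta betaS ->
  aut_invariant mB beta -> aut_invariant mBS betaS.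
Proof.
move=> hbc hbp hbf inv T phi P iota' mP bP hbc' hbp' hbf'.
apply: (inv T (phi \o sigma) P (fun b => iota' (iota b))).
- exact: base_change_comp.
- by split=> [|c c']; [exact: hbp'.1 | rewrite hbp'.2 hbp.2].
- by split=> [|c c']; [exact: hbf'.1 | rewrite hbf'.2 hbf.2].
Qed.

Section FormalSums.
Variables (K T : comPzRingType) (phi : {rmorphism K -> T}) (M : lmodType K).

Definition formal_sum := seq (T * M).

Definition eval_sum (Q : lmodType T) (f : M -> Q) (x : formal_sum) : Q :=
  \sum_(p <- x) p.1 *: f p.2.

Definition sum_equiv (x y : formal_sum) : bool :=
  `[< forall (Q : lmodType T) (f : M -> Q), lin_along phi f ->
        eval_sum f x = eval_sum f y >].

Lemma sum_equiv_refl : reflexive sum_equiv.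
Proof. by move=> x; apply/asboolP. Qed.
Lemma sum_equiv_sym : symmetric sum_equiv.
Proof.
by move=> x y; apply/asboolP/asboolP => e Q f hf; rewrite (e Q f hf).
Qed.
Lemma sum_equiv_trans : transitive sum_equiv.
Proof.
by move=> y x z /asboolP exy /asboolP eyz; apply/asboolP => Q f hf; rewrite exy ?eyz.
Qed.
Canonical sum_equiv_rel := EquivRel sum_equiv sum_equiv_refl sum_equiv_sym sum_equiv_trans.

Definition tensor := {eq_quot sum_equiv}.
HB.instance Definition _ := Choice.on tensor.
Definition to_tensor (x : formal_sum) : tensor := \pi x.

Lemma to_tensorK (t : tensor) : to_tensor (repr t) = t.
Proof. exact: reprK. Qed.

Lemma to_tensor_eq x y :
    (forall (Q : lmodType T) (f : M -> Q), lin_along phi f -> eval_sum f x = eval_sum f y) ->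
  to_tensor x = to_tensor y.
Proof. by move=> e; apply/eqquotP/asboolP. Qed.

Section Evaluation.
Variables (Q : lmodType T) (f : M -> Q) (hf : lin_along phi f).

Lemma eval_sum_repr x : eval_sum f (repr (to_tensor x)) = eval_sum f x.
Proof. by have /eqquotP/asboolP := to_tensorK (to_tensor x); apply. Qed.

Lemma eval_sum_cat x y : eval_sum f (x ++ y) = eval_sum f x + eval_sum f y.
Proof. exact: big_cat. Qed.
Lemma eval_sum_nil : eval_sum f [::] = 0.
Proof. exact: big_nil. Qed.
Lemma eval_sum_cons p x : eval_sum f (p :: x) = p.1 *: f p.2 + eval_sum f x.
Proof. exact: big_cons. Qed.
Lemma eval_sum_opp x : eval_sum f [seq (- p.1, p.2) | p <- x] = - eval_sum f x.
Proof. by rewrite /eval_sum big_map -sumrN; apply: eq_bigr => p _; rewrite scaleNr. Qed.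
Lemma eval_sum_scale a x : eval_sum f [seq (a * p.1, p.2) | p <- x] = a *: eval_sum f x.
Proof.
by rewrite /eval_sum big_map scaler_sumr; apply: eq_bigr => p _; rewrite scalerA.
Qed.
End Evaluation.

Ltac tensor_eq := apply: to_tensor_eq => ? ? ?;
  match goal with hf : lin_along _ _ |- _ =>
    rewrite ?(eval_sum_cat, eval_sum_nil, eval_sum_opp, eval_sum_scale,
              eval_sum_repr hf, eval_sum_cons) end.

Definition tensor_add (t u : tensor) := to_tensor (repr t ++ repr u).
Definition tensor_zero := to_tensor [::].
Definition tensor_opp (t : tensor) := to_tensor [seq (- p.1, p.2) | p <- repr t].
Definition tensor_scale (a : T) (t : tensor) := to_tensor [seq (a * p.1, p.2) | p <- repr t].

Lemma tensor_addA : associative tensor_add.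
Proof. by move=> x y z; tensor_eq; rewrite addrA. Qed.
Lemma tensor_addC : commutative tensor_add.
Proof. by move=> x y; tensor_eq; rewrite addrC. Qed.
Lemma tensor_add0 : left_id tensor_zero tensor_add.
Proof. by move=> x; rewrite -[RHS]to_tensorK; tensor_eq; rewrite add0r. Qed.
Lemma tensor_addN : left_inverse tensor_zero tensor_opp tensor_add.
Proof. by move=> x; tensor_eq; rewrite addNr. Qed.
HB.instance Definition _ :=
  GRing.isZmodule.Build tensor tensor_addA tensor_addC tensor_add0 tensor_addN.

Lemma tensor_scaleA a b t : tensor_scale a (tensor_scale b t) = tensor_scale (a * b) t.
Proof. by tensor_eq; rewrite scalerA. Qed.
Lemma tensor_scale1 : left_id 1 tensor_scale.
Proof. by move=> x; rewrite -[RHS]to_tensorK; tensor_eq; rewrite scale1r. Qed.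
Lemma tensor_scaleDr : right_distributive tensor_scale +%R.
Proof. by move=> a x y; tensor_eq; rewrite scalerDr. Qed.
Lemma tensor_scaleDl t : {morph tensor_scale^~ t : a b / a + b}.
Proof. by move=> a b; tensor_eq; rewrite scalerDl. Qed.
HB.instance Definition _ := GRing.Zmodule_isLmodule.Build T tensor
  tensor_scaleA tensor_scale1 tensor_scaleDr tensor_scaleDl.

Definition tensor1 (m : M) : tensor := to_tensor [:: (1, m)].

Lemma to_tensor_nil : to_tensor [::] = 0.
Proof. by []. Qed.
Lemma to_tensor_cons p x : to_tensor (p :: x) = p.1 *: tensor1 p.2 + to_tensor x.
Proof. by tensor_eq; rewrite /= addr0 scale1r. Qed.

Lemma tensor_base_change : base_change phi tensor1.
Proof.
split=> [a m m'|Q f hf].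
  tensor_eq; rewrite /= !addr0 !scale1r.
  by match goal with hf : lin_along _ _ |- _ => rewrite hf end.
split.
  exists (fun t => eval_sum f (repr t)); split=> [a t u|m].
    by rewrite eval_sum_repr // eval_sum_cat eval_sum_repr // eval_sum_scale.
  by rewrite eval_sum_repr // eval_sum_cons eval_sum_nil addr0 scale1r.
suff eq_eval g : lin g -> (forall m, g (tensor1 m) = f m) -> forall t, g t = eval_sum f (repr t).
  by move=> g g' hg hg' e e' t; rewrite (eq_eval g) // (eq_eval g').
move=> hg e t; rewrite -{1}(to_tensorK t); elim: (repr t) => [|p x IH].
  by rewrite to_tensor_nil lin0 // eval_sum_nil.
by rewrite to_tensor_cons hg e IH eval_sum_cons.
Qed.
End FormalSums.
Arguments tensor {K T} phi M.
Arguments to_tensor {K T} phi {M} x.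
Arguments tensor1 {K T} phi {M} m.
Arguments tensor_base_change {K T} phi M.

Section TensorRing.
Variables (R S : comPzRingType) (sigma : {rmorphism R -> S}).
Variables (T : comPzRingType) (phi : {rmorphism R -> T}).
Local Notation TR := (restrict phi T^o).

Definition ring_tensor := tensor sigma TR.
HB.instance Definition _ := GRing.Lmodule.on ring_tensor.

Definition mulT (u v : TR) : TR := (u : T) * (v : T).

Lemma mulT_linl (v : TR) (a : R) (u u' : TR) :
  mulT (a *: u + u') v = a *: mulT u v + mulT u' v.
Proof.
by rewrite /mulT; change ((phi a * u + u') * v = phi a * (u * v) + u' * v :> T);
  rewrite mulrDl mulrA.
Qed.

Definition formal_mul (x y : formal_sum S TR) : formal_sum S TR :=
  [seq (p.1 * q.1, mulT p.2 q.2) | p <- x, q <- y].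

Section Evaluation.
Variables (Q : lmodType S) (f : TR -> Q) (hf : lin_along sigma f).

Lemma eval_sum_mul x y :
  eval_sum f (formal_mul x y) = \sum_(p <- x) \sum_(q <- y) (p.1 * q.1) *: f (mulT p.2 q.2).
Proof. exact: big_allpairs_dep. Qed.

Lemma eval_sum_mull x y :
  eval_sum f (formal_mul x y) = \sum_(q <- y) q.1 *: eval_sum (fun u => f (mulT u q.2)) x.
Proof.
rewrite eval_sum_mul exchange_big; apply: eq_bigr => q _; rewrite /eval_sum scaler_sumr.
by apply: eq_bigr => p _; rewrite scalerA mulrC.
Qed.

Lemma eval_sum_mulC x y : eval_sum f (formal_mul x y) = eval_sum f (formal_mul y x).
Proof.
rewrite !eval_sum_mul exchange_big; apply: eq_bigr => q _; apply: eq_bigr => p _.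
by congr (_ *: f _); [exact: mulrC | rewrite /mulT mulrC].
Qed.

Lemma eval_sum_mul_reprl x y :
  eval_sum f (formal_mul (repr (to_tensor sigma x)) y) = eval_sum f (formal_mul x y).
Proof.
rewrite !eval_sum_mull; apply: eq_bigr => q _; rewrite eval_sum_repr // => a u u'.
by rewrite mulT_linl hf.
Qed.

Lemma eval_sum_mul_reprr x y :
  eval_sum f (formal_mul x (repr (to_tensor sigma y))) = eval_sum f (formal_mul x y).
Proof. by rewrite eval_sum_mulC eval_sum_mul_reprl eval_sum_mulC. Qed.
End Evaluation.

Definition ring_tensor_mul (t u : ring_tensor) : ring_tensor :=
  to_tensor sigma (formal_mul (repr t) (repr u)).
Definition ring_tensor_one : ring_tensor := to_tensor sigma [:: (1, 1 : TR)].

Lemma ring_tensor_mulA : associative ring_tensor_mul.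
Proof.
move=> a b c; apply: to_tensor_eq => Q f hf.
rewrite eval_sum_mul_reprl // eval_sum_mul_reprr // !eval_sum_mul !big_allpairs_dep.
apply: eq_bigr => p _; rewrite !big_allpairs_dep; apply: eq_bigr => q _.
by apply: eq_bigr => r _; rewrite /= mulrA /mulT mulrA.
Qed.

Lemma ring_tensor_mulC : commutative ring_tensor_mul.
Proof. by move=> a b; apply: to_tensor_eq => Q f hf; rewrite eval_sum_mulC. Qed.

Lemma ring_tensor_mul1 : left_id ring_tensor_one ring_tensor_mul.
Proof.
move=> a; rewrite -[RHS]to_tensorK; apply: to_tensor_eq => Q f hf.
rewrite eval_sum_mul_reprl // eval_sum_mul big_cons big_nil addr0.
by apply: eq_bigr => q _; rewrite mul1r /mulT mul1r.
Qed.

Lemma ring_tensor_mulDl : left_distributive ring_tensor_mul +%R.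
Proof.
move=> a b c; apply: to_tensor_eq => Q f hf.
change (eval_sum f (formal_mul (repr (to_tensor sigma (repr a ++ repr b))) (repr c)) =
  eval_sum f (repr (to_tensor sigma (formal_mul (repr a) (repr c))) ++
              repr (to_tensor sigma (formal_mul (repr b) (repr c))))).
by rewrite eval_sum_mul_reprl // eval_sum_cat !eval_sum_repr // !eval_sum_mul big_cat.
Qed.

HB.instance Definition _ := GRing.Zmodule_isComPzRing.Build ring_tensor
  ring_tensor_mulA ring_tensor_mulC ring_tensor_mul1 ring_tensor_mulDl.

Definition ring_tensorl (t : T) : ring_tensor := tensor1 sigma (t : TR).

Lemma ring_tensorl_zmod : zmod_morphism ring_tensorl.
Proof. exact: lin_alongB (tensor_base_change sigma TR).1. Qed.
HB.instance Definition _ :=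
  GRing.isZmodMorphism.Build T ring_tensor ring_tensorl ring_tensorl_zmod.

Lemma ring_tensorl_monoid : monoid_morphism ring_tensorl.
Proof.
split=> // x y; apply: to_tensor_eq => Q f hf.
rewrite eval_sum_mul_reprl // eval_sum_mul_reprr // eval_sum_mul !big_cons !big_nil.
by rewrite !addr0 eval_sum_cons eval_sum_nil addr0 mulr1.
Qed.
HB.instance Definition _ :=
  GRing.isMonoidMorphism.Build T ring_tensor ring_tensorl ring_tensorl_monoid.

Definition ring_tensorr (s : S) : ring_tensor := to_tensor sigma [:: (s, 1 : TR)].

Lemma ring_tensorr_zmod : zmod_morphism ring_tensorr.
Proof.
move=> x y; apply: to_tensor_eq => Q f hf.
rewrite /= eval_sum_cat !eval_sum_repr // eval_sum_opp !eval_sum_repr //.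
by rewrite !eval_sum_cons !eval_sum_nil !addr0 scalerBl.
Qed.
HB.instance Definition _ :=
  GRing.isZmodMorphism.Build S ring_tensor ring_tensorr ring_tensorr_zmod.

Lemma ring_tensorr_monoid : monoid_morphism ring_tensorr.
Proof.
split=> // x y; apply: to_tensor_eq => Q f hf.
rewrite eval_sum_mul_reprl // eval_sum_mul_reprr // eval_sum_mul !big_cons !big_nil.
by rewrite !addr0 eval_sum_cons eval_sum_nil addr0 /mulT mulr1.
Qed.
HB.instance Definition _ :=
  GRing.isMonoidMorphism.Build S ring_tensor ring_tensorr ring_tensorr_monoid.

Lemma ring_tensorl_phi r : ring_tensorl (phi r) = ring_tensorr (sigma r).
Proof.
apply: to_tensor_eq => Q f hf; rewrite !eval_sum_cons !eval_sum_nil !addr0 scale1r.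
have := hf r (1 : TR) 0; rewrite (lin_along0 hf) !addr0 => <-.
by congr (f _); change (phi r = phi r * 1); rewrite mulr1.
Qed.
End TensorRing.

Lemma faithfully_flat_sub_eq0 (R S : comPzRingType) (sigma : {rmorphism R -> S})
    (M N : lmodType R) (u : M -> N) :
  faithfully_flat sigma -> lin u -> injective u ->
  (forall m, tensor1 sigma (u m) = 0) -> forall m : M, m = 0.
Proof.
move=> [hflat hfaith] hu u_inj u0.
have zero_inj : injective (fun _ : tensor sigma M => 0 : tensor sigma N).
  apply: (hflat M N u _ _ _ _ _ hu u_inj (tensor_base_change sigma M)
           (tensor_base_change sigma N)) => [a x y|m]; first by rewrite scaler0 addr0.
  by rewrite u0.
by apply: (hfaith M _ _ (tensor_base_change sigma M)) => p; apply: zero_inj.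
Qed.

Section TensorRingInjective.
Variables (R S : comPzRingType) (sigma : {rmorphism R -> S}).
Variables (T : comPzRingType) (phi : {rmorphism R -> T}) (d : T).
Local Notation TR := (restrict phi T^o).

Definition multiples : {pred TR} := fun t => `[< exists r, (t : T) = phi r * d >].

Lemma multiples_closed : subsemimod_closed multiples.
Proof.
split; first split.
- by apply/asboolP; exists 0; rewrite rmorph0 mul0r.
- move=> x y /asboolP[r ->] /asboolP[r' ->]; apply/asboolP; exists (r + r').
  by rewrite rmorphD mulrDl.
- move=> a x /asboolP[r ->]; apply/asboolP; exists (a * r).
  by change (phi a * (phi r * d) = phi (a * r) * d); rewrite rmorphM mulrA.
Qed.
HB.instance Definition _ := GRing.isSubmodClosed.Build R TR multiples multiples_closed.

Record cyclic_submodule := CyclicSub { cyclic_val :> TR; _ : cyclic_val \in multiples }.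
HB.instance Definition _ := [isSub for cyclic_val].
HB.instance Definition _ := [Choice of cyclic_submodule by <:].
HB.instance Definition _ := [SubChoice_isSubLmodule of cyclic_submodule by <:].

Lemma ring_tensorl_eq0 : faithfully_flat sigma -> ring_tensorl sigma phi d = 0 -> d = 0.
Proof.
move=> hff hd.
have val_lin : lin (val : cyclic_submodule -> TR) by [].
have val_tensor0 (n : cyclic_submodule) : tensor1 sigma (val n) = 0.
  case: n => t t_mem; have /asboolP[r tE] := t_mem.
  change (ring_tensorl sigma phi t = 0).
  by rewrite tE rmorphM /= hd mulr0.
have d_mem : (d : TR) \in multiples by apply/asboolP; exists 1; rewrite rmorph1 mul1r.
have := faithfully_flat_sub_eq0 hff val_lin val_inj val_tensor0 (CyclicSub d_mem).
by move/(congr1 val).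
Qed.
End TensorRingInjective.

Lemma ring_tensorl_inj (R S : comPzRingType) (sigma : {rmorphism R -> S})
    (T : comPzRingType) (phi : {rmorphism R -> T}) :
  faithfully_flat sigma -> injective (ring_tensorl sigma phi).
Proof.
move=> hff x y e; apply/subr0_eq.
by apply: (ring_tensorl_eq0 (phi := phi) hff); rewrite rmorphB /= e subrr.
Qed.

Section Descent.
Variables (R S : comPzRingType) (sigma : {rmorphism R -> S}).
Variables (B : lmodType R) (mB : B -> B -> B) (beta : B -> B -> R).
Variables (BS : lmodType S) (iota : B -> BS) (mBS : BS -> BS -> BS) (betaS : BS -> BS -> S).
Hypotheses (hbc : base_change sigma iota) (hbp : base_prod sigma iota mB mBS).
Hypothesis hbf : base_form sigma iota beta betaS.
Variables (T : comPzRingType) (phi : {rmorphism R -> T}).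
Variables (P : lmodType T) (iP : B -> P) (mP : P -> P -> P) (bP : P -> P -> T).
Hypotheses (hbcP : base_change phi iP) (hbpP : base_prod phi iP mB mP).
Hypothesis hbfP : base_form phi iP beta bP.
Variables (f : P -> P) (haut : alg_aut mP f).

Local Notation T' := (ring_tensor sigma phi).
Let psi : {rmorphism T -> T'} := ring_tensorl sigma phi.
Let chi : {rmorphism S -> T'} := ring_tensorr sigma phi.
Local Notation P' := (tensor psi P).
Let iP' : P -> P' := tensor1 psi.
Let hbc' : base_change psi iP' := tensor_base_change psi P.

Lemma psi_phi r : psi (phi r) = chi (sigma r).
Proof. exact: ring_tensorl_phi. Qed.

Lemma iP'_iP_lin : lin_along sigma ((fun b => iP' (iP b)) : B -> restrict chi P').
Proof.
move=> a x y; rewrite hbcP.1 hbc'.1.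
change (psi (phi a) *: iP' (iP x) + iP' (iP y) = chi (sigma a) *: iP' (iP x) + iP' (iP y)).
by rewrite psi_phi.
Qed.

(* The map [B_S -> B_T (x)_T T'] induced by [b (x) s |-> (b (x) 1) (x) (1 (x) s)]. *)
Definition jS : BS -> P' := sval (base_change_lift hbc iP'_iP_lin).
Lemma jS_lin : lin_along chi jS.
Proof. by case: (svalP (base_change_lift hbc iP'_iP_lin)). Qed.
Lemma jS_iota b : jS (iota b) = iP' (iP b).
Proof. by case: (svalP (base_change_lift hbc iP'_iP_lin)) => _; apply. Qed.

Lemma mP_linr c : lin_along psi (fun c' => iP' (mP c c')).
Proof. by move=> a x y; rewrite hbpP.1.2 hbc'.1. Qed.
Lemma mP_linl c' : lin_along psi (fun c => iP' (mP c c')).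
Proof. by move=> a x y; rewrite hbpP.1.1 hbc'.1. Qed.
Definition mP' : P' -> P' -> P' := sval (base_change_lift2 hbc' mP_linr mP_linl).
Lemma mP'_linr x : lin (mP' x).
Proof. by case: (svalP (base_change_lift2 hbc' mP_linr mP_linl)). Qed.
Lemma mP'_linl y : lin (fun x => mP' x y).
Proof. by case: (svalP (base_change_lift2 hbc' mP_linr mP_linl)). Qed.
Lemma mP'_iP' c c' : mP' (iP' c) (iP' c') = iP' (mP c c').
Proof. by case: (svalP (base_change_lift2 hbc' mP_linr mP_linl)). Qed.

Lemma bP_linr c : lin_along psi ((fun c' => psi (bP c c')) : P -> T'^o).
Proof. by move=> a x y; rewrite hbfP.1.2 rmorphD rmorphM. Qed.
Lemma bP_linl c' : lin_along psi ((fun c => psi (bP c c')) : P -> T'^o).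
Proof. by move=> a x y; rewrite hbfP.1.1 rmorphD rmorphM. Qed.
Definition bP' : P' -> P' -> T'^o := sval (base_change_lift2 hbc' bP_linr bP_linl).
Lemma bP'_linr x : lin (bP' x).
Proof. by case: (svalP (base_change_lift2 hbc' bP_linr bP_linl)). Qed.
Lemma bP'_linl y : lin (fun x => bP' x y).
Proof. by case: (svalP (base_change_lift2 hbc' bP_linr bP_linl)). Qed.
Lemma bP'_iP' c c' : bP' (iP' c) (iP' c') = psi (bP c c').
Proof. by case: (svalP (base_change_lift2 hbc' bP_linr bP_linl)). Qed.

Lemma jS_base_change : base_change chi jS.
Proof.
split=> [|Q F hF]; first exact: jS_lin.
split.
  have hF' : lin_along phi ((fun b => F (iota b)) : B -> restrict psi Q).
    move=> a x y; rewrite hbc.1 hF.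
    change (chi (sigma a) *: F (iota x) + F (iota y) = psi (phi a) *: F (iota x) + F (iota y)).
    by rewrite psi_phi.
  have [h [hh eh]] := base_change_lift hbcP hF'.
  have [g [hg eg]] := base_change_lift hbc' (hh : lin_along psi h).
  exists g; split=> //.
  have l := lin_along_postcomp jS_lin hg.
  by apply: (base_change_eq hbc (l : lin (_ : BS -> restrict chi Q)) hF) => b; rewrite jS_iota eg eh.
move=> g g' hg hg' e e'; apply: (base_change_eq hbc') => // p.
have l := lin_along_postcomp hbc'.1 hg; have l' := lin_along_postcomp hbc'.1 hg'.
by apply: (base_change_eq hbcP (l : lin (_ : P -> restrict psi Q)) l') => b /=; rewrite -jS_iota e e'.
Qed.

Lemma jS_base_prod : base_prod chi jS mBS mP'.
Proof.
split; first by split=> a x y z; [exact: mP'_linl | exact: mP'_linr].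
have l1 c : lin ((fun c' => mP' (jS c) (jS c')) : BS -> restrict chi P').
  exact: lin_along_postcomp jS_lin (mP'_linr _).
have l2 c' : lin ((fun c => mP' (jS c) (jS c')) : BS -> restrict chi P').
  exact: lin_along_postcomp jS_lin (mP'_linl _).
have l3 c : lin ((fun c' => jS (mBS c c')) : BS -> restrict chi P').
  by apply: lin_along_precomp jS_lin => a x y; exact: hbp.1.2.
have l4 c' : lin ((fun c => jS (mBS c c')) : BS -> restrict chi P').
  by apply: lin_along_precomp jS_lin => a x y; exact: hbp.1.1.
move=> c c'; apply: (base_change_eq2 hbc l1 l2 l3 l4) => b b'.
by rewrite !jS_iota mP'_iP' hbpP.2 -jS_iota hbp.2.
Qed.

Lemma jS_base_form : base_form chi jS betaS bP'.
Proof.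
split; first by split=> a x y z; [exact: bP'_linl | exact: bP'_linr].
have l1 c : lin ((fun c' => bP' (jS c) (jS c')) : BS -> restrict chi T'^o).
  exact: lin_along_postcomp jS_lin (bP'_linr _).
have l2 c' : lin ((fun c => bP' (jS c) (jS c')) : BS -> restrict chi T'^o).
  exact: lin_along_postcomp jS_lin (bP'_linl _).
have l3 c : lin ((fun c' => chi (betaS c c')) : BS -> restrict chi T'^o).
  by move=> a x y; rewrite hbf.1.2 rmorphD rmorphM.
have l4 c' : lin ((fun c => chi (betaS c c')) : BS -> restrict chi T'^o).
  by move=> a x y; rewrite hbf.1.1 rmorphD rmorphM.
move=> c c'; apply: (base_change_eq2 hbc l1 l2 l3 l4) => b b'.
by rewrite !jS_iota bP'_iP' hbfP.2 hbf.2 psi_phi.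
Qed.

Lemma f_lin_along : lin_along psi (fun p => iP' (f p)).
Proof. exact: lin_along_precomp haut.1 hbc'.1. Qed.
Definition f' : P' -> P' := sval (base_change_lift hbc' f_lin_along).
Lemma f'_lin : lin f'.
Proof. by case: (svalP (base_change_lift hbc' f_lin_along)). Qed.
Lemma f'_iP' p : f' (iP' p) = iP' (f p).
Proof. by case: (svalP (base_change_lift hbc' f_lin_along)) => _; apply. Qed.

Lemma f'_aut : alg_aut mP' f'.
Proof.
have [f_lin [[g fK gK] f_mul]] := haut.
have g_lin : lin g by move=> a x y; rewrite -{1}(gK x) -{1}(gK y) -f_lin fK.
have [g' [g'_lin g'_iP']] := base_change_lift hbc' (lin_along_precomp g_lin hbc'.1).
have id_lin : lin (fun x : P' => x) by [].
split; last split; first exact: f'_lin.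
  exists g' => x.
    by apply: (base_change_eq hbc' (lin_comp f'_lin g'_lin) id_lin) => p; rewrite f'_iP' g'_iP' fK.
  by apply: (base_change_eq hbc' (lin_comp g'_lin f'_lin) id_lin) => p; rewrite g'_iP' f'_iP' gK.
have l1 x : lin (fun y => f' (mP' x y)) by exact: lin_comp (mP'_linr _) f'_lin.
have l2 y : lin (fun x => f' (mP' x y)) by exact: lin_comp (mP'_linl _) f'_lin.
have l3 x : lin (fun y => mP' (f' x) (f' y)) by exact: lin_comp f'_lin (mP'_linr _).
have l4 y : lin (fun x => mP' (f' x) (f' y)) by exact: lin_comp f'_lin (mP'_linl (f' y)).
apply: (base_change_eq2 hbc' l1 l2 l3 l4) => c c'.
by rewrite mP'_iP' !f'_iP' f_mul mP'_iP'.
Qed.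

Lemma aut_descent : faithfully_flat sigma -> aut_invariant mBS betaS ->
  forall x y, bP (f x) (f y) = bP x y.
Proof.
move=> hff hinv x y; apply: (ring_tensorl_inj (phi := phi) hff).
have := hinv T' chi P' jS mP' bP' jS_base_change jS_base_prod jS_base_form f' f'_aut.
by move/(_ (iP' x) (iP' y)); rewrite !f'_iP' !bP'_iP'.
Qed.
End Descent.

Lemma aut_invariant_descent (R S : comPzRingType) (sigma : {rmorphism R -> S})
    (B : lmodType R) (mB : B -> B -> B) (beta : B -> B -> R)
    (BS : lmodType S) (iota : B -> BS) (mBS : BS -> BS -> BS) (betaS : BS -> BS -> S) :
  base_change sigma iota -> base_prod sigma iota mB mBS ->
  base_form sigma iota beta betaS -> faithfully_flat sigma ->
  aut_invariant mBS betaS -> aut_invariant mB beta.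
Proof.
move=> hbc hbp hbf hff hinv T phi P iP mP bP hbcP hbpP hbfP f haut.
exact: (aut_descent hbc hbp hbf hbcP hbpP hbfP haut hff hinv).
Qed.

Theorem lemma5p3 (R : comPzRingType) (B : lmodType R) (mB : B -> B -> B)
    (beta : B -> B -> R) (S : comPzRingType) (sigma : {rmorphism R -> S})
    (BS : lmodType S) (iota : B -> BS) (mBS : BS -> BS -> BS) (betaS : BS -> BS -> S) :
  bilin_prod mB -> bilin_form beta ->
  base_change sigma iota -> base_prod sigma iota mB mBS ->
  base_form sigma iota beta betaS ->
  (aut_invariant mB beta -> aut_invariant mBS betaS) /\
  (faithfully_flat sigma -> aut_invariant mBS betaS -> aut_invariant mB beta).
Proof.
move=> _ _ hbc hbp hbf; split.
- exact: aut_invariant_base_change hbc hbp hbf.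
- exact: aut_invariant_descent hbc hbp hbf.
Qed.
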